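(* Let $\langle A, \leq, \otimes, \ominus, \mathbf{1}\rangle$ be a residuated partially ordered monoid with bottom element $\bot$, let $k\geq1$ and $a = a_1\ldots a_k$, $b = b_1\ldots b_k \in Lex_k(A)$. If $\delta(a,b) = \gamma(a,b) \leq k$ or $\delta(a,b) > \gamma(a,b)$, then the residuation $a \ominus_k b$ of $a$ by $b$ in $\langle Lex_k(A), \leq_k, \otimes^k, \mathbf{1}^k\rangle$ exists and equals $$(a_1 \ominus b_1) \ldots (a_{\gamma(a,b)} \ominus b_{\gamma(a,b)})\,\bot^{k-\gamma(a,b)},$$ that is, this tuple $r$ lies in $Lex_k(A)$ and for every $c \in Lex_k(A)$, $b \otimes^k c \leq_k a$ iff $c \leq_k r$.
   Context: A residuated partially ordered monoid $\langle A, \leq, \otimes, \ominus, \mathbf{1}\rangle$ consists of a partial order $\langle A,\leq\rangle$, a commutative monoid $\langle A,\otimes,\mathbf{1}\rangle$, and a binary operation $\ominus$ with $b \otimes c \leq a$ iff $c \leq a \ominus b$ for all $a,b,c\in A$. $a<b$ means $a\leq b$, $a\neq b$. $I(A) = \{c \in A \mid \forall a,b \in A.\ a \otimes c = b \otimes c \Rightarrow a = b\}$, $C(A)=A\setminus I(A)$. $Lex_k(A)\subseteq A^k$: $Lex_1(A) = A$, $Lex_{k+1}(A) = I(A)\, Lex_k(A) \cup C(A)\{\bot\}^k$ (concatenations of sequences; $\{\bot\}^k$ the singleton of $k$ copies of $\bot$). The order $\leq_k$: $\leq_1=\leq$, and for $k\geq2$, $a_1 \ldots a_k \leq_k b_1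 \ldots b_k$ iff $a_1 < b_1$, or $a_1 = b_1$ and $a_2 \ldots a_k \leq_{k-1} b_2 \ldots b_k$. $\otimes^k$ is componentwise, $\mathbf{1}^k=\mathbf{1}\ldots\mathbf{1}$; $\bot^n$ is the sequence of $n$ copies of $\bot$. For $a,b\in Lex_k(A)$: $\gamma(a,b) = \min\{ i \mid a_i \ominus b_i \in C(A)\}$ and $\delta(a,b) = \min\{ i \mid (a_i \ominus b_i) \otimes b_i < a_i\}$, each equal to $k+1$ if the set is empty. *)

From mathcomp Require Import all_boot.
Set Implicit Arguments. Unset Strict Implicit. Unset Printing Implicit Defensive.

Definition is_rpom (A : Type) (le : A -> A -> Prop) (mul res : A -> A -> A)
  (one : A) : Prop :=
  (forall x, le x x) /\
  (forall x y, le x y -> le y x -> x = y) /\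
  (forall x y z, le x y -> le y z -> le x z) /\
  (forall x y z, mul x (mul y z) = mul (mul x y) z) /\
  (forall x y, mul x y = mul y x) /\
  (forall x, mul one x = x) /\
  (forall a b c, le (mul b c) a <-> le c (res a b)).

Definition is_bottom (A : Type) (le : A -> A -> Prop) (bot : A) : Prop :=
  forall x, le bot x.

Section Lex.
Variables (A : Type) (le : A -> A -> Prop) (mul res : A -> A -> A) (bot : A).

Definition ltA (x y : A) : Prop := le x y /\ x <> y.

Definition Icanc (c : A) : Prop := forall a b, mul a c = mul b c -> a = b.
Definition Cnc (c : A) : Prop := ~ Icanc c.

(* Lex_k(A) as a predicate on sequences (Lex_0 is empty, unused) *)
Fixpoint Lex (k : nat) (s : seq A) : Prop :=
  match k with
  | 0 => False
  | k'.+1 =>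
    match k' with
    | 0 => exists a, s = [:: a]
    | _ => (exists c t, [/\ s = c :: t, Icanc c & Lex k' t])
           \/ (exists c, s = c :: nseq k' bot /\ Cnc c)
    end
  end.

Fixpoint lexle (k : nat) (s t : seq A) : Prop :=
  match k with
  | 0 => False
  | k'.+1 =>
    match s, t with
    | a :: s', b :: t' =>
      match k' with
      | 0 => le a b
      | _ => ltA a b \/ (a = b /\ lexle k' s' t')
      end
    | _, _ => False
    end
  end.

Definition mulk (s t : seq A) : seq A := [seq mul x.1 x.2 | x <- zip s t].

Definition resk (s t : seq A) : seq A := [seq res x.1 x.2 | x <- zip s t].

(* g = min {i in 1..k | P i}, or k+1 if the set is empty *)
Definition is_min_index (P : nat -> Prop) (k g : nat) : Prop :=
  [/\ 1 <= g <= k.+1, (forall i, 1 <= i < g -> ~ P i) & (g <= k -> P g)].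

(* 1-based component access a_i *)
Definition comp (s : seq A) (i : nat) : A := nth bot s i.-1.

Definition is_gamma (k : nat) (a b : seq A) (g : nat) : Prop :=
  is_min_index (fun i => Cnc (res (comp a i) (comp b i))) k g.

Definition is_delta (k : nat) (a b : seq A) (d : nat) : Prop :=
  is_min_index (fun i => ltA (mul (res (comp a i) (comp b i)) (comp b i)) (comp a i)) k d.

End Lex.

From Pilot Require Import Defs.
From mathcomp Require Import all_boot zify.
From Stdlib Require Import Classical.
Set Implicit Arguments. Unset Strict Implicit. Unset Printing Implicit Defensive.

(* Compare b (x) c with a on the first components.  Residuation turns
   b1 c1 <= a1 into c1 <= r1 := a1 (-) b1, so only ties need care.  If c1 < r1
   but b1 c1 = a1, then also b1 r1 = a1, so b1 is not cancellable and the tail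
   of b is bottom, which makes the comparison of the tails trivial.  If c1 = r1
   and r1 is not cancellable (gamma = 1), then c and r both continue with
   bottoms.  Otherwise gamma > 1, and gamma <= delta gives r1 b1 = a1: the
   first components tie on both sides and we recurse on the tails.  The
   hypothesis on delta is only used through gamma <= delta. *)

Lemma is_min_index_first (P : nat -> Prop) k g :
  is_min_index P k.+1 g -> (g = 1 /\ P 1) \/ (1 < g /\ ~ P 1).
Proof.
case=> Hg Hbelow Hat; case: g Hg Hbelow Hat => [|[|g]] Hg Hbelow Hat //.
- by left; split => //; apply: Hat.
- by right; split => //; apply: Hbelow.
Qed.

Lemma is_min_index_tail (P Q : nat -> Prop) k g :
  (forall i, P i.+2 <-> Q i.+1) ->
  is_min_index P k.+1 g.+2 -> is_min_index Q k g.+1.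
Proof.
move=> HPQ [Hg Hbelow Hat]; split; first by lia.
- by case=> [|i] Hi; [lia | apply/HPQ/Hbelow; lia].
- by move=> Hgk; apply/HPQ/Hat; lia.
Qed.

Definition lex_residual (A : Type) (res : A -> A -> A) (bot : A) (k g : nat)
  (a b : seq A) : seq A :=
  take g (resk res a b) ++ nseq (k - g) bot.

(* [comp] alone would be ssrfun's function composition. *)
Definition res_exact_below (A : Type) (mul res : A -> A -> A) (bot : A) (g : nat)
  (a b : seq A) : Prop :=
  forall i, 1 <= i < g ->
  mul (res (Defs.comp bot a i) (Defs.comp bot b i)) (Defs.comp bot b i)
  = Defs.comp bot a i.

Section LexSequences.

Variables (A : Type) (le : A -> A -> Prop) (mul res : A -> A -> A) (bot : A).

Lemma size_Lex k s : Lex mul bot k s -> size s = k.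
Proof.
elim: k s => [|[|k] IH] s //=; first by case=> x ->.
case=> [[c [t [-> _ Ht]]] | [c [-> _]]] /=; first by rewrite (IH t Ht).
by rewrite size_nseq.
Qed.

Lemma Lex_nseq_bot k : Lex mul bot k.+1 (nseq k.+1 bot).
Proof.
elim: k => [|k IH]; first by exists bot.
have [Ibot | Cbot] := classic (Icanc mul bot).
- by left; exists bot, (nseq k.+1 bot).
- by right; exists bot.
Qed.

Lemma Lex_head_tail k s :
  Lex mul bot k.+2 s -> exists x t, s = x :: t /\ Lex mul bot k.+1 t.
Proof.
case=> [[c [t [-> _ Ht]]] | [c [-> _]]]; first by exists c, t.
by exists c, (nseq k.+1 bot); split => //; apply: Lex_nseq_bot.
Qed.

Lemma Lex_tail_Cnc k x s :
  Lex mul bot k.+2 (x :: s) -> Cnc mul x -> s = nseq k.+1 bot.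
Proof. by case=> [[c [t [[<- _] Hc _]]] | [c [[_ ->] _]]]. Qed.

Lemma lexle_cons k x s y t :
  lexle le k.+2 (x :: s) (y :: t) <-> ltA le x y \/ (x = y /\ lexle le k.+1 s t).
Proof. by []. Qed.

Lemma lexle_refl (le_refl : forall x, le x x) k s :
  size s = k.+1 -> lexle le k.+1 s s.
Proof.
elim: k s => [|k IH] [|x s] // [Hs]; first exact: le_refl.
by apply/lexle_cons; right; split => //; apply: IH.
Qed.

Lemma lexle_nseq_bot (Hbot : is_bottom le bot) k s :
  size s = k.+1 -> lexle le k.+1 (nseq k.+1 bot) s.
Proof.
elim: k s => [|k IH] [|x s] // [Hs]; first exact: Hbot.
apply/lexle_cons; have [<- | Hne] := classic (bot = x); last by left; split.
by right; split => //; apply: IH.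
Qed.

Lemma mulk_cons x s y t : mulk mul (x :: s) (y :: t) = mul x y :: mulk mul s t.
Proof. by []. Qed.

Lemma lex_residual_cons_Cnc k x s y t :
  lex_residual res bot k.+1 1 (x :: s) (y :: t) = res x y :: nseq k bot.
Proof. by rewrite /lex_residual /= take0 subSS subn0. Qed.

Lemma lex_residual_cons_Icanc k g x s y t :
  lex_residual res bot k.+2 g.+2 (x :: s) (y :: t)
  = res x y :: lex_residual res bot k.+1 g.+1 s t.
Proof. by rewrite /lex_residual /= subSS. Qed.

Lemma is_gamma_tail k g x s y t :
  is_gamma mul res bot k.+2 (x :: s) (y :: t) g.+2 ->
  is_gamma mul res bot k.+1 s t g.+1.
Proof. exact: is_min_index_tail. Qed.

Lemma res_exact_below_head g x s y t :
  res_exact_below mul res bot g.+2 (x :: s) (y :: t) -> mul (res x y) y = x.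
Proof. by move=> Hex; apply: (Hex 1). Qed.

Lemma res_exact_below_tail g x s y t :
  res_exact_below mul res bot g.+2 (x :: s) (y :: t) ->
  res_exact_below mul res bot g.+1 s t.
Proof. by move=> Hex [|i] Hi; [lia | apply: (Hex i.+2); lia]. Qed.

Lemma Lex_lex_residual k a b g :
  Lex mul bot k.+1 a -> Lex mul bot k.+1 b -> is_gamma mul res bot k.+1 a b g ->
  Lex mul bot k.+1 (lex_residual res bot k.+1 g a b).
Proof.
elim: k a b g => [|k IH] a b g Ha Hb.
  case: Ha Hb => [a1 ->] [b1 ->] [Hg _ _].
  by case: g Hg => [|[|[|g]]] // _; exists (res a1 b1).
have [a1 [a' [Ea Ha']]] := Lex_head_tail Ha; subst a.
have [b1 [b' [Eb Hb']]] := Lex_head_tail Hb; subst b.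
move=> Hg; case: (is_min_index_first Hg) => [[-> Cr] | [Hg1 Ir]].
  by rewrite lex_residual_cons_Cnc; right; exists (res a1 b1).
case: g Hg Hg1 => [|[|g]] Hg // _.
rewrite lex_residual_cons_Icanc; left; exists (res a1 b1).
eexists; split; [by [] | exact: NNPP Ir | exact: IH (is_gamma_tail Hg)].
Qed.

End LexSequences.

Section Residuated.

Variables (A : Type) (le : A -> A -> Prop) (mul res : A -> A -> A) (one bot : A).
Hypotheses (HR : is_rpom le mul res one) (Hbot : is_bottom le bot).

Lemma le_refl x : le x x.
Proof. by case: HR => refl _; apply: refl. Qed.

Lemma le_anti x y : le x y -> le y x -> x = y.
Proof. by case: HR => _ [anti _]; apply: anti. Qed.

Lemma le_trans x y z : le x y -> le y z -> le x z.
Proof. by case: HR => _ [_ [trans _]]; apply: trans. Qed.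

Lemma mulC x y : mul x y = mul y x.
Proof. by case: HR => _ [_ [_ [_ [comm _]]]]; apply: comm. Qed.

Lemma le_mul_res a b c : le (mul b c) a <-> le c (res a b).
Proof. by case: HR => _ [_ [_ [_ [_ [_ adj]]]]]; apply: adj. Qed.

Lemma mul_mono b c c' : le c c' -> le (mul b c) (mul b c').
Proof.
move=> Hc; apply/le_mul_res/(le_trans Hc)/le_mul_res/le_refl.
Qed.

Lemma mul_res_le a b : le (mul (res a b) b) a.
Proof. by rewrite mulC; apply/le_mul_res/le_refl. Qed.

Lemma mul_bot_r x : mul x bot = bot.
Proof. by apply: le_anti; [apply/le_mul_res/Hbot | apply: Hbot]. Qed.

Lemma mul_bot_l x : mul bot x = bot.
Proof. by rewrite mulC mul_bot_r. Qed.

Lemma mul_res_eq a b c : le c (res a b) -> mul b c = a -> mul (res a b) b = a.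
Proof.
move=> Hc Habc; apply: le_anti; first exact: mul_res_le.
by rewrite mulC -{1}Habc; apply: mul_mono.
Qed.

Lemma mulk_nseq_bot_l k s : size s = k -> mulk mul (nseq k bot) s = nseq k bot.
Proof.
elim: k s => [|k IH] [|x s] // [Hs].
by rewrite -[nseq k.+1 bot]/(bot :: nseq k bot) mulk_cons IH // mul_bot_l.
Qed.

Lemma mulk_nseq_bot_r k s : size s = k -> mulk mul s (nseq k bot) = nseq k bot.
Proof.
elim: k s => [|k IH] [|x s] // [Hs].
by rewrite -[nseq k.+1 bot]/(bot :: nseq k bot) mulk_cons IH // mul_bot_r.
Qed.

Lemma is_delta_res_exact_below k a b d :
  is_delta le mul res bot k a b d -> res_exact_below mul res bot d a b.
Proof.
case=> _ Hbelow _ i Hi; apply: NNPP => Hne.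
by apply: (Hbelow i Hi); split => //; apply: mul_res_le.
Qed.

(* [x], [y], [z] stand for the heads of [b], [c], [a], and [P], [Q] for the
   comparisons of the tails of [b c] with [a] and of [c] with the residual. *)
Lemma lex_head_residuation x y z (P Q : Prop) :
  (ltA le y (res z x) -> mul x y = z -> P) ->
  (y = res z x -> ltA le (mul x y) z \/ (mul x y = z /\ P) <-> Q) ->
  ltA le (mul x y) z \/ (mul x y = z /\ P) <->
  ltA le y (res z x) \/ (y = res z x /\ Q).
Proof.
move=> Hlt Htie; split=> [Hxy | [[Hy Hne] | [Hy HQ]]].
- have Hy : le y (res z x).
    by apply/le_mul_res; case: Hxy => [[] // | [-> _]]; apply: le_refl.
  have [Ey | Ney] := classic (y = res z x); last by left.
  by right; split => //; apply/Htie.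
- have Hxy : le (mul x y) z by apply/le_mul_res.
  have [Exy | Nexy] := classic (mul x y = z); last by left.
  by right; split => //; apply: Hlt.
- exact/(Htie Hy).
Qed.

Lemma lexle_tail_of_lt_res k x b y c z a :
  Lex mul bot k.+2 (x :: b) -> size c = k.+1 -> size a = k.+1 ->
  ltA le y (res z x) -> mul x y = z -> lexle le k.+1 (mulk mul b c) a.
Proof.
move=> Hb Hc Ha [Hy Hne] Hxy.
have Hex := mul_res_eq Hy Hxy.
have [Ix | Cx] := classic (Icanc mul x).
  by case: Hne; apply: Ix; rewrite Hex mulC.
by rewrite (Lex_tail_Cnc Hb Cx) mulk_nseq_bot_l //; apply: lexle_nseq_bot.
Qed.

Lemma lexle_mulk_lex_residual k a b c g :
  Lex mul bot k.+1 a -> Lex mul bot k.+1 b -> Lex mul bot k.+1 c ->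
  is_gamma mul res bot k.+1 a b g -> res_exact_below mul res bot g a b ->
  lexle le k.+1 (mulk mul b c) a <->
  lexle le k.+1 c (lex_residual res bot k.+1 g a b).
Proof.
elim: k a b c g => [|k IH] a b c g Ha Hb Hc.
  case: Ha Hb Hc => [a1 ->] [b1 ->] [c1 ->] [Hg _ _] _.
  by case: g Hg => [|[|[|g]]] // _; apply: le_mul_res.
have [a1 [a' [Ea Ha']]] := Lex_head_tail Ha; subst a.
have [b1 [b' [Eb Hb']]] := Lex_head_tail Hb; subst b.
have [c1 [c' [Ec Hc']]] := Lex_head_tail Hc; subst c.
have [Sa Sb Sc] := And3 (size_Lex Ha') (size_Lex Hb') (size_Lex Hc').
have Hlt := lexle_tail_of_lt_res Hb Sc Sa.
move=> Hg Hexact; case: (is_min_index_first Hg) => [[-> Cr] | [Hg1 _]].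
  rewrite lex_residual_cons_Cnc mulk_cons !lexle_cons.
  apply: lex_head_residuation; first exact: Hlt.
  move=> Ec; have Cc : Cnc mul c1 by rewrite Ec.
  rewrite (Lex_tail_Cnc Hc Cc) mulk_nseq_bot_r //; split=> _.
  - by apply: lexle_refl; [apply: le_refl | rewrite size_nseq].
  - have [<- | Ne] := classic (mul b1 c1 = a1).
      by right; split => //; apply: lexle_nseq_bot.
    by left; split => //; apply/le_mul_res; rewrite Ec; apply: le_refl.
case: g Hg Hexact Hg1 => [|[|g]] Hg Hexact // _.
rewrite lex_residual_cons_Icanc mulk_cons !lexle_cons.
apply: lex_head_residuation; first exact: Hlt.
move=> ->.
rewrite mulC (res_exact_below_head Hexact).
have Hg' := is_gamma_tail Hg; have Hexact' := res_exact_below_tail Hexact.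
rewrite -(IH a' b' c' g.+1 Ha' Hb' Hc' Hg' Hexact').
by split=> [[[_ /(_ erefl)] | [] //] | HP] //; right.
Qed.

End Residuated.

Theorem proposition4 (A : Type) (le : A -> A -> Prop) (mul res : A -> A -> A)
  (one bot : A) :
  is_rpom le mul res one -> is_bottom le bot ->
  forall (k : nat), 1 <= k ->
  forall (a b : seq A), Lex mul bot k a -> Lex mul bot k b ->
  forall (g d : nat), is_gamma mul res bot k a b g -> is_delta le mul res bot k a b d ->
  (d = g /\ g <= k) \/ g < d ->
  let r := take g (resk res a b) ++ nseq (k - g) bot in
  Lex mul bot k r /\
  (forall c : seq A, Lex mul bot k c ->
     (lexle le k (mulk mul b c) a <-> lexle le k c r)).
Proof.
move=> HR Hbot [//|k] _ a b Ha Hb g d Hg Hd Hgd r.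
have Hexact : res_exact_below mul res bot g a b.
  by move=> i Hi; apply: (is_delta_res_exact_below HR Hd); lia.
split; first exact: Lex_lex_residual Ha Hb Hg.
move=> c Hc; exact: (lexle_mulk_lex_residual HR Hbot Ha Hb Hc Hg Hexact).
Qed.
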